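(* The restriction of $\varepsilon$ to $\widehat{\operatorname{IET}^{\bowtie}}$ is a group homomorphism $\widehat{\operatorname{IET}^{\bowtie}}\to\mathbb{Z}/2\mathbb{Z}$.
   Context: $X=[0,1[$; $\widehat{\operatorname{PC}^{\bowtie}}$ is the group of bijections $X\to X$ continuous outside a finite subset, containing the group ${\mathfrak S}_{\mathrm{fin}}$ of finitely supported permutations with classical signature $\operatorname{sgn}$ valued in $\mathbb{Z}/2\mathbb{Z}$. $\widehat{\operatorname{IET}^{\bowtie}}$ is the subgroup of bijections $f$ for which there is a finite partition of $X$ into intervals $[a,b[$ such that on each $]a,b[$, $f$ has the form $x\mapsto x+c$ or $x\mapsto -x+c$. For $h\in\widehat{\operatorname{PC}^{\bowtie}}$, a partition associated with $h$ is a finite partition $\mathcal P=\{I_1,\dots,I_n\}$ of $X$ into intervals $I_j=[\alpha_j,b_j[$ such that $h$ is continuous on $I_j^\circ=]\alpha_j,b_j[$ for each $j$ (so $h$ is strictly monotone there and $h(I_j^\circ)$ is an open interval). Let $\beta_j$ be the left endpoint of $h(I_j^\circ)$; $\{h(\alpha_j)\}=\{\beta_j\}$, and $\sigma_{(h,\mathcal P)}\in{\mathfrak S}_{\mathrm{fin}}$ sends $h(\alpha_j)$ to $\beta_j$ for each $j$ and fixes all other points. $R(h,\mathcal P)$ is the number of $j$ with $h$ decreasing on $I_j^\circ$, and $\varepsilon(h,\mathcal P)=R(h,\mathcal P)+\operatorname{sgn}(\sigma_{(h,\mathcal P)})\bmod 2$. There is a unique associated partition $\mathcal P^{\min}_h$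 with the fewest intervals, every associated partition refines it, and $\varepsilon(h):=\varepsilon(h,\mathcal P^{\min}_h)$. *)

From Stdlib Require Import Reals Lra List Sorted ClassicalEpsilon.
From Coquelicot Require Import Coquelicot.
Import ListNotations.
Open Scope R_scope.

Definition X (x : R) : Prop := 0 <= x < 1.

(** Maps X -> X are represented by functions R -> R; only their values on X matter. *)
Definition bij_X (f : R -> R) : Prop :=
  (forall x, X x -> X (f x)) /\
  (forall x y, X x -> X y -> f x = f y -> x = y) /\
  (forall y, X y -> exists x, X x /\ f x = y).

(** A finite partition of X into intervals [a,b[ is given by its list of
    endpoints cs = [c_0; c_1; ...; c_n] with 0 = c_0 < c_1 < ... < c_n = 1;
    the intervals are I_j = [c_j, c_{j+1}[ for j < n. *)
Definition nb_int (cs : list R) : nat := (length cs - 1)%nat.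
Definition alpha (cs : list R) (j : nat) : R := nth j cs 0.
Definition bnd (cs : list R) (j : nat) : R := nth (S j) cs 0.

Definition is_partition (cs : list R) : Prop :=
  (2 <= length cs)%nat /\ nth 0 cs 0 = 0 /\ last cs 0 = 1 /\ Sorted Rlt cs.

Definition in_open (cs : list R) (j : nat) (x : R) : Prop :=
  alpha cs j < x < bnd cs j.

Definition PC (f : R -> R) : Prop :=
  bij_X f /\ exists F : list R,
    forall x, X x -> ~ In x F -> continuity_pt f x.

Definition IET (f : R -> R) : Prop :=
  bij_X f /\ exists cs, is_partition cs /\
    forall j, (j < nb_int cs)%nat ->
      (exists c, forall x, in_open cs j x -> f x = x + c) \/
      (exists c, forall x, in_open cs j x -> f x = - x + c).

Definition associated (h : R -> R) (cs : list R) : Prop :=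
  is_partition cs /\
  forall j, (j < nb_int cs)%nat -> forall x, in_open cs j x -> continuity_pt h x.

Definition beta (h : R -> R) (cs : list R) (j : nat) : R :=
  real (Glb_Rbar (fun y => exists x, in_open cs j x /\ y = h x)).

Definition decr_on (h : R -> R) (cs : list R) (j : nat) : Prop :=
  forall x y, in_open cs j x -> in_open cs j y -> x < y -> h y < h x.

Definition indices (cs : list R) : list nat := seq 0 (nb_int cs).

Definition Rnum (h : R -> R) (cs : list R) : nat :=
  length (filter (fun j => if excluded_middle_informative (decr_on h cs j)
                           then true else false) (indices cs)).

(** sigma_(h,P) sends h(alpha_j) to beta_j and fixes all other points; its
    signature is the parity of its number of inversions on the finite set
    {h(alpha_j)} (which contains its support): pairs of points
    h(alpha_i) < h(alpha_j) with sigma(h(alpha_i)) > sigma(h(alpha_j)). *)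
Definition sigma_inversions (h : R -> R) (cs : list R) : nat :=
  length (filter (fun p : nat * nat =>
     let (i, j) := p in
     if Rlt_dec (h (alpha cs i)) (h (alpha cs j)) then
       (if Rlt_dec (beta h cs j) (beta h cs i) then true else false)
     else false) (list_prod (indices cs) (indices cs))).

Definition sgn_sigma (h : R -> R) (cs : list R) : bool :=
  Nat.odd (sigma_inversions h cs).

(** epsilon(h,P) in Z/2Z = bool (addition = xorb) *)
Definition eps_P (h : R -> R) (cs : list R) : bool :=
  xorb (Nat.odd (Rnum h cs)) (sgn_sigma h cs).

Definition Pmin (h : R -> R) : list R :=
  epsilon (inhabits nil) (fun cs => associated h cs /\
     forall cs', associated h cs' -> (length cs <= length cs')%nat).

Definition eps (h : R -> R) : bool := eps_P h (Pmin h).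

From Stdlib Require Import Reals Lra Lia List Sorted Permutation ClassicalEpsilon Bool Arith.
From Coquelicot Require Import Coquelicot.
Import ListNotations.
Open Scope R_scope.

(* Inserting one point x
   into a piece leaves eps(h,P) unchanged: on an increasing piece the new point sits at
   the same place in both orders; on a decreasing piece R grows by one and the two new
   beta's are swapped, so the signature flips too.  As two such partitions have a
   common refinement, and h, being injective, stays affine across its continuity
   points so that P^min_h is such a partition, eps(h) can be computed on any of them.
   For f o g, refine a partition of g by the g-preimages of the cut points of f: the
   images g(I_j) then tile [0,1[ and form a partition for f.  A piece of f o g is
   decreasing iff exactly one of the corresponding pieces of g and f is, and since the
   signature of a permutation does not depend on the labels it permutes, the
   inversion parities add up as well. *)

Definition xsum (l : list nat) (f : nat -> bool) : bool :=
  fold_right (fun x acc => xorb (f x) acc) false l.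

Lemma xsum_app l m f : xsum (l ++ m) f = xorb (xsum l f) (xsum m f).
Proof. induction l; simpl; auto. rewrite IHl. now rewrite xorb_assoc. Qed.

Lemma xsum_ext_in l f g : (forall x, In x l -> f x = g x) -> xsum l f = xsum l g.
Proof. induction l; simpl; intros H; auto. rewrite H by auto. now rewrite IHl by auto. Qed.

Lemma xsum_xorb l f g : xsum l (fun x => xorb (f x) (g x)) = xorb (xsum l f) (xsum l g).
Proof.
  induction l; simpl; auto. rewrite IHl.
  destruct (f a), (g a), (xsum l f), (xsum l g); reflexivity.
Qed.

Lemma xsum_false l : xsum l (fun _ => false) = false.
Proof. induction l; simpl; auto. Qed.

Lemma xsum_map l p f : xsum (map p l) f = xsum l (fun x => f (p x)).
Proof. induction l; simpl; auto. now rewrite IHl. Qed.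

Lemma xsum_perm l l' f : Permutation l l' -> xsum l f = xsum l' f.
Proof.
  induction 1; simpl; auto.
  - now rewrite IHPermutation.
  - destruct (f x), (f y); reflexivity.
  - congruence.
Qed.

Lemma xsum_comm l m (r : nat -> nat -> bool) :
  xsum l (fun i => xsum m (fun j => r i j)) = xsum m (fun j => xsum l (fun i => r i j)).
Proof.
  induction l; simpl.
  - now rewrite xsum_false.
  - rewrite IHl. now rewrite <- xsum_xorb.
Qed.

Lemma xsum_eqb l m : NoDup l -> In m l -> xsum l (fun k => Nat.eqb k m) = true.
Proof.
  induction 1 as [|x l Hx Hl IH]; simpl; intros Hin; [contradiction|].
  destruct Hin as [<-|Hin].
  - rewrite Nat.eqb_refl, (xsum_ext_in l _ (fun _ => false)), xsum_false; [reflexivity|].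
    intros y Hy. destruct (Nat.eqb_spec y x); subst; auto. contradiction.
  - rewrite IH by auto. destruct (Nat.eqb_spec x m); subst; auto.
Qed.

Lemma odd_length_filter l (p : nat -> bool) :
  Nat.odd (length (filter p l)) = xsum l p.
Proof.
  induction l; simpl; auto. destruct (p a); simpl; auto.
  rewrite Nat.odd_succ, <- Nat.negb_odd, IHl; reflexivity.
Qed.

Lemma odd_length_filter_prod l m (r : nat * nat -> bool) :
  Nat.odd (length (filter r (list_prod l m))) = xsum l (fun i => xsum m (fun j => r (i, j))).
Proof.
  induction l; simpl; auto.
  rewrite filter_app, length_app, Nat.odd_add, IHl. f_equal.
  clear. induction m; simpl; auto. destruct (r (a, a0)); simpl; auto.
  rewrite Nat.odd_succ, <- Nat.negb_odd, IHm. reflexivity.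
Qed.

Definition xsum2 n (r : nat -> nat -> bool) : bool :=
  xsum (seq 0 n) (fun i => xsum (seq 0 n) (fun j => r i j)).

Lemma xsum2_ext n r r' :
  (forall i j, (i < n)%nat -> (j < n)%nat -> r i j = r' i j) -> xsum2 n r = xsum2 n r'.
Proof.
  intros H. apply xsum_ext_in. intros i Hi. apply xsum_ext_in. intros j Hj.
  apply in_seq in Hi, Hj. apply H; lia.
Qed.

Lemma xsum2_xorb n r r' :
  xsum2 n (fun i j => xorb (r i j) (r' i j)) = xorb (xsum2 n r) (xsum2 n r').
Proof. unfold xsum2. rewrite <- xsum_xorb. apply xsum_ext_in. intros. apply xsum_xorb. Qed.

Lemma xsum2_transpose n r : xsum2 n (fun i j => r j i) = xsum2 n r.
Proof. unfold xsum2. now rewrite xsum_comm. Qed.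

Lemma xsum2_S n r : xsum2 (S n) r =
  xorb (xsum2 n r) (xorb (xsum (seq 0 n) (fun i => xorb (r i n) (r n i))) (r n n)).
Proof.
  unfold xsum2. rewrite seq_S, xsum_app. simpl. rewrite xorb_false_r.
  rewrite (xsum_ext_in _ _ (fun i => xorb (xsum (seq 0 n) (fun j => r i j)) (r i n))).
  2:{ intros. now rewrite xsum_app; simpl; rewrite xorb_false_r. }
  rewrite xsum_app; simpl; rewrite xorb_false_r, !xsum_xorb.
  destruct (xsum (seq 0 n) (fun i => xsum (seq 0 n) (fun j => r i j))),
    (xsum (seq 0 n) (fun i => r i n)), (xsum (seq 0 n) (fun j => r n j)), (r n n);
    reflexivity.
Qed.

Definition is_perm n (p : nat -> nat) : Prop :=
  (forall i, (i < n)%nat -> (p i < n)%nat) /\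
  (forall i j, (i < n)%nat -> (j < n)%nat -> p i = p j -> i = j).

Lemma is_perm_Permutation n p : is_perm n p -> Permutation (map p (seq 0 n)) (seq 0 n).
Proof.
  intros [H1 H2]. apply NoDup_Permutation_bis.
  - apply NoDup_map_NoDup_ForallPairs; [|apply seq_NoDup].
    intros i j Hi Hj. apply in_seq in Hi, Hj. apply H2; lia.
  - now rewrite length_map.
  - intros x Hx. apply in_map_iff in Hx. destruct Hx as [i [<- Hi]].
    apply in_seq in Hi. apply in_seq. specialize (H1 i). lia.
Qed.

Lemma is_perm_surj n p :
  is_perm n p -> forall k, (k < n)%nat -> exists i, (i < n)%nat /\ p i = k.
Proof.
  intros Hp k Hk. assert (Hin : In k (map p (seq 0 n))).
  { eapply Permutation_in; [symmetry; apply is_perm_Permutation; auto|apply in_seq; lia]. }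
  apply in_map_iff in Hin. destruct Hin as [i [<- Hi]]. apply in_seq in Hi.
  exists i; split; auto; lia.
Qed.

Lemma xsum_reindex n p f : is_perm n p -> xsum (seq 0 n) (fun i => f (p i)) = xsum (seq 0 n) f.
Proof. intros Hp. rewrite <- xsum_map. apply xsum_perm. now apply is_perm_Permutation. Qed.

Lemma xsum2_reindex n p r : is_perm n p -> xsum2 n (fun i j => r (p i) (p j)) = xsum2 n r.
Proof.
  intros Hp. unfold xsum2.
  rewrite (xsum_ext_in _ _ (fun i => xsum (seq 0 n) (fun j => r (p i) j))).
  - apply (xsum_reindex n p (fun i => xsum (seq 0 n) (fun j => r i j))); auto.
  - intros i _. apply (xsum_reindex n p (fun j => r (p i) j)); auto.
Qed.

Lemma finite_choice n (P : nat -> nat -> Prop) : (forall i, (i < n)%nat -> exists k, P i k) ->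
  exists f, forall i, (i < n)%nat -> P i (f i).
Proof.
  induction n as [|n IH]; intros H.
  - exists (fun _ => 0%nat). intros; lia.
  - destruct IH as [f Hf]. { intros i Hi. apply H. lia. }
    destruct (H n ltac:(lia)) as [k Hk].
    exists (fun i => if Nat.eqb i n then k else f i). intros i Hi.
    destruct (Nat.eqb_spec i n); subst; auto. apply Hf. lia.
Qed.

Definition insert_at {A} (p : nat) (f : nat -> A) (y : A) (k : nat) : A :=
  if Nat.ltb k p then f k else if Nat.eqb k p then y else f (k - 1)%nat.

Definition snoc {A} (n : nat) (f : nat -> A) (y : A) (k : nat) : A :=
  if Nat.ltb k n then f k else y.

Definition shift_perm (n p k : nat) : nat :=
  if Nat.ltb k p then k else if Nat.ltb k n then S k else p.

Lemma shift_perm_is_perm n p : (p <= n)%nat -> is_perm (S n) (shift_perm n p).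
Proof.
  intros Hp. unfold shift_perm. split.
  - intros i Hi. destruct (Nat.ltb_spec i p), (Nat.ltb_spec i n); lia.
  - intros i j Hi Hj.
    destruct (Nat.ltb_spec i p), (Nat.ltb_spec i n), (Nat.ltb_spec j p), (Nat.ltb_spec j n); lia.
Qed.

Lemma insert_at_shift_perm {A} n p (f : nat -> A) y k : (p <= n)%nat -> (k <= n)%nat ->
  insert_at p f y (shift_perm n p k) = snoc n f y k.
Proof.
  intros Hp Hk. unfold insert_at, shift_perm, snoc.
  destruct (Nat.ltb_spec k p).
  - destruct (Nat.ltb_spec k p), (Nat.ltb_spec k n); auto; lia.
  - destruct (Nat.ltb_spec k n).
    + destruct (Nat.ltb_spec (S k) p), (Nat.eqb_spec (S k) p); try lia. f_equal; lia.
    + now rewrite Nat.ltb_irrefl, Nat.eqb_refl.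
Qed.

Lemma xsum_snoc n f y : xsum (seq 0 (S n)) (snoc n f y) = xorb (xsum (seq 0 n) f) y.
Proof.
  rewrite seq_S, xsum_app. simpl. unfold snoc at 2. rewrite Nat.ltb_irrefl, xorb_false_r.
  f_equal. apply xsum_ext_in. intros i Hi. apply in_seq in Hi. unfold snoc.
  destruct (Nat.ltb_spec i n); auto; lia.
Qed.

Lemma xsum_insert_at n p f y :
  (p <= n)%nat -> xsum (seq 0 (S n)) (insert_at p f y) = xorb (xsum (seq 0 n) f) y.
Proof.
  intros Hp. rewrite <- (xsum_reindex (S n) (shift_perm n p)) by now apply shift_perm_is_perm.
  rewrite <- xsum_snoc. apply xsum_ext_in. intros k Hk. apply in_seq in Hk.
  apply insert_at_shift_perm; lia.
Qed.

Definition swap_next (j k : nat) : nat :=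
  if Nat.eqb k j then S j else if Nat.eqb k (S j) then j else k.

Lemma swap_next_is_perm n j : (S j < n)%nat -> is_perm n (swap_next j).
Proof.
  intros H. unfold swap_next. split.
  - intros i Hi. destruct (Nat.eqb_spec i j), (Nat.eqb_spec i (S j)); lia.
  - intros i k Hi Hk.
    destruct (Nat.eqb_spec i j), (Nat.eqb_spec i (S j)), (Nat.eqb_spec k j),
      (Nat.eqb_spec k (S j)); lia.
Qed.

Lemma swap_next_involutive j k : swap_next j (swap_next j k) = k.
Proof.
  unfold swap_next. destruct (Nat.eqb_spec k j), (Nat.eqb_spec k (S j)); subst;
  repeat (first [rewrite Nat.eqb_refl
                | match goal with |- context [Nat.eqb ?a ?b] => destruct (Nat.eqb_spec a b) end]);
  lia.
Qed.

Definition Rltb (a b : R) : bool := if Rlt_dec a b then true else false.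

Definition discord (u v : nat -> R) (i j : nat) : bool :=
  if Rlt_dec (u i) (u j) then (if Rlt_dec (v j) (v i) then true else false) else false.

Definition inv_par n (u v : nat -> R) : bool := xsum2 n (discord u v).

Definition sort_par n (u : nat -> R) : bool :=
  xsum2 n (fun i j => andb (Nat.ltb i j) (Rltb (u j) (u i))).

Definition inj_below n (u : nat -> R) : Prop :=
  forall i j, (i < n)%nat -> (j < n)%nat -> u i = u j -> i = j.

Lemma inj_below_comp n u p : inj_below n u -> is_perm n p -> inj_below n (fun i => u (p i)).
Proof. intros Hu [H1 H2] i j Hi Hj E. apply H2; auto. Qed.

Lemma inj_below_INR n : inj_below n INR.
Proof. intros i j _ _ E. now apply INR_eq. Qed.

Lemma inv_par_cocycle n u v :
  inj_below n u -> inj_below n v -> inv_par n u v = xorb (sort_par n u) (sort_par n v).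
Proof.
  intros Hu Hv. unfold inv_par.
  rewrite (xsum2_ext n (discord u v) (fun i j => xorb (andb (Nat.ltb i j) (discord u v i j))
      (andb (Nat.ltb j i) (discord u v i j)))).
  2:{ intros i j Hi Hj. destruct (Nat.ltb_spec i j), (Nat.ltb_spec j i); simpl;
      try (destruct (discord u v i j); reflexivity); try lia.
      replace j with i by lia. unfold discord. destruct (Rlt_dec (u i) (u i)); [lra|reflexivity]. }
  rewrite xsum2_xorb, <- (xsum2_transpose n (fun i j => andb (Nat.ltb j i) (discord u v i j))).
  unfold sort_par. rewrite <- !xsum2_xorb. apply xsum2_ext. intros i j Hi Hj.
  destruct (Nat.ltb_spec i j); simpl; auto.
  assert (u i <> u j) by (intro E; apply Hu in E; auto; lia).
  assert (v i <> v j) by (intro E; apply Hv in E; auto; lia).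
  unfold discord, Rltb.
  destruct (Rlt_dec (u i) (u j)), (Rlt_dec (v j) (v i)), (Rlt_dec (u j) (u i)),
    (Rlt_dec (v i) (v j)); simpl; auto; lra.
Qed.

Lemma inv_par_trans n u v w : inj_below n u -> inj_below n v -> inj_below n w ->
  inv_par n u w = xorb (inv_par n u v) (inv_par n v w).
Proof.
  intros Hu Hv Hw. rewrite !inv_par_cocycle by assumption.
  destruct (sort_par n u), (sort_par n v), (sort_par n w); reflexivity.
Qed.

Lemma inv_par_sym n u v : inv_par n u v = inv_par n v u.
Proof.
  unfold inv_par. rewrite <- xsum2_transpose. apply xsum2_ext. intros i j _ _.
  unfold discord. destruct (Rlt_dec (u j) (u i)), (Rlt_dec (v i) (v j)); reflexivity.
Qed.

Lemma inv_par_reindex n p u v : is_perm n p ->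
  inv_par n (fun i => u (p i)) (fun i => v (p i)) = inv_par n u v.
Proof. intros Hp. apply (xsum2_reindex n p (discord u v) Hp). Qed.

(** [inv_par n c (fun i => c (p i))] is the signature of [p], whatever the injective
    labelling [c]. *)
Lemma inv_par_relabel n c d p : inj_below n c -> inj_below n d -> is_perm n p ->
  inv_par n c (fun i => c (p i)) = inv_par n d (fun i => d (p i)).
Proof.
  intros Hc Hd Hp.
  assert (Hcp := inj_below_comp n c p Hc Hp). assert (Hdp := inj_below_comp n d p Hd Hp).
  rewrite (inv_par_trans n c d (fun i => c (p i))),
    (inv_par_trans n d (fun i => d (p i)) (fun i => c (p i))) by assumption.
  rewrite (inv_par_reindex n p d c Hp), (inv_par_sym n d c).
  destruct (inv_par n c d), (inv_par n d (fun i => d (p i))); reflexivity.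
Qed.

Lemma inv_par_snoc n p u v y : is_perm n p ->
  (forall i, (i < n)%nat -> v i = u (p i)) ->
  (forall i, (i < n)%nat -> y <> u i) ->
  (forall i, (i < n)%nat -> y <> v i) ->
  inv_par (S n) (snoc n u y) (snoc n v y) = inv_par n u v.
Proof.
  intros Hp Hv Hu1 Hv1. unfold inv_par. rewrite xsum2_S.
  assert (E1 : xsum2 n (discord (snoc n u y) (snoc n v y)) = xsum2 n (discord u v)).
  { apply xsum2_ext. intros i j Hi Hj. unfold discord, snoc.
    destruct (Nat.ltb_spec i n), (Nat.ltb_spec j n); try lia. reflexivity. }
  assert (E2 : discord (snoc n u y) (snoc n v y) n n = false).
  { unfold discord. destruct (Rlt_dec _ _); auto. lra. }
  rewrite E1, E2, xorb_false_r.
  (* [(i, n)] or [(n, i)] is discordant iff exactly one of [u i], [v i] is below [y];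
     both counts agree since [v] permutes the values of [u]. *)
  rewrite (xsum_ext_in _ _ (fun i => xorb (Rltb (u i) y) (Rltb (v i) y))).
  - rewrite xsum_xorb, (xsum_ext_in _ (fun i => Rltb (v i) y) (fun i => Rltb (u (p i)) y)).
    + rewrite (xsum_reindex n p (fun i => Rltb (u i) y)) by auto.
      now rewrite xorb_nilpotent, xorb_false_r.
    + intros i Hi. apply in_seq in Hi. rewrite Hv; auto; lia.
  - intros i Hi. apply in_seq in Hi. unfold discord, snoc, Rltb.
    rewrite Nat.ltb_irrefl. destruct (Nat.ltb_spec i n); try lia.
    specialize (Hu1 i ltac:(lia)). specialize (Hv1 i ltac:(lia)).
    destruct (Rlt_dec (u i) y), (Rlt_dec y (v i)), (Rlt_dec y (u i)), (Rlt_dec (v i) y);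
      simpl; auto; lra.
Qed.

Lemma inv_par_insert_at n k p u v y : (k <= n)%nat -> is_perm n p ->
  (forall i, (i < n)%nat -> v i = u (p i)) ->
  (forall i, (i < n)%nat -> y <> u i) ->
  (forall i, (i < n)%nat -> y <> v i) ->
  inv_par (S n) (insert_at k u y) (insert_at k v y) = inv_par n u v.
Proof.
  intros Hk Hp Hv Hu1 Hv1.
  rewrite <- (inv_par_reindex (S n) (shift_perm n k)) by now apply shift_perm_is_perm.
  rewrite <- (inv_par_snoc n p u v y); auto.
  apply xsum2_ext. intros i j Hi Hj. unfold discord. rewrite !insert_at_shift_perm by lia.
  reflexivity.
Qed.

Lemma Rltb_INR a b : Rltb (INR a) (INR b) = Nat.ltb a b.
Proof.
  unfold Rltb. destruct (Rlt_dec (INR a) (INR b)) as [H|H], (Nat.ltb_spec a b); auto.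
  - apply INR_lt in H. lia.
  - exfalso. apply H. now apply lt_INR.
Qed.

Lemma inv_par_swap_next n j : (S j < n)%nat -> inv_par n INR (fun i => INR (swap_next j i)) = true.
Proof.
  intros H. unfold inv_par.
  rewrite (xsum2_ext n _ (fun i k => andb (Nat.eqb i j) (Nat.eqb k (S j)))).
  - unfold xsum2. rewrite (xsum_ext_in _ _ (fun i => Nat.eqb i j)).
    + apply xsum_eqb; [apply seq_NoDup|apply in_seq; lia].
    + intros i Hi. destruct (Nat.eqb_spec i j); simpl.
      * apply xsum_eqb; [apply seq_NoDup|apply in_seq; lia].
      * apply xsum_false.
  - intros i k Hi Hk.
    replace (discord INR (fun i => INR (swap_next j i)) i k)
      with (andb (Rltb (INR i) (INR k)) (Rltb (INR (swap_next j k)) (INR (swap_next j i))))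
      by (unfold discord, Rltb; destruct (Rlt_dec _ _), (Rlt_dec _ _); auto).
    rewrite !Rltb_INR. unfold swap_next.
    destruct (Nat.eqb_spec i j), (Nat.eqb_spec i (S j)), (Nat.eqb_spec k j),
      (Nat.eqb_spec k (S j)); subst; simpl;
      repeat match goal with |- context [Nat.ltb ?a ?b] => destruct (Nat.ltb_spec a b) end;
      simpl; auto; lia.
Qed.

Lemma Sorted_Rlt_strong l : Sorted Rlt l -> StronglySorted Rlt l.
Proof. apply Sorted_StronglySorted. intros a b c; apply Rlt_trans. Qed.

Lemma Sorted_Rlt_nth l : Sorted Rlt l -> forall i j, (i < j)%nat -> (j < length l)%nat ->
  nth i l 0 < nth j l 0.
Proof.
  intros H. apply Sorted_Rlt_strong in H. induction H as [|a l _ IH Ha]; simpl;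
    intros i j Hij Hj; [lia|].
  destruct i, j; try lia.
  - apply Forall_forall with (x := nth j l 0) in Ha; auto. apply nth_In; lia.
  - apply IH; lia.
Qed.

Lemma Sorted_Rlt_nth_le l : Sorted Rlt l -> forall i j, (i <= j)%nat -> (j < length l)%nat ->
  nth i l 0 <= nth j l 0.
Proof.
  intros H i j H1 H2. destruct (Nat.eq_dec i j); [subst; lra|].
  left; apply Sorted_Rlt_nth; auto; lia.
Qed.

Lemma Sorted_Rlt_of_nth l :
  (forall k, (S k < length l)%nat -> nth k l 0 < nth (S k) l 0) -> Sorted Rlt l.
Proof.
  induction l as [|a l IH]; intros H; constructor.
  - apply IH. intros k Hk. apply (H (S k)). simpl; lia.
  - destruct l as [|b l]; constructor. apply (H 0%nat). simpl; lia.
Qed.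

Lemma Sorted_Rlt_NoDup l : Sorted Rlt l -> NoDup l.
Proof.
  intros H. apply Sorted_Rlt_strong in H. induction H as [|a l _ IH Ha]; constructor; auto.
  intros Hin. rewrite Forall_forall in Ha. specialize (Ha a Hin). lra.
Qed.

Lemma Sorted_Rlt_ext l1 l2 : Sorted Rlt l1 -> Sorted Rlt l2 ->
  (forall y, In y l1 <-> In y l2) -> l1 = l2.
Proof.
  intros H1 H2. apply Sorted_Rlt_strong in H1, H2. revert l2 H2.
  induction H1 as [|a l1 H1 IH Ha]; intros l2 H2 E.
  - destruct l2 as [|b l2]; auto. exfalso. apply (E b). simpl; auto.
  - destruct H2 as [|b l2 H2 Hb]; [exfalso; apply (E a); simpl; auto|].
    rewrite Forall_forall in Ha, Hb.
    assert (a = b).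
    { assert (Ia : In a (b :: l2)) by (apply E; simpl; auto).
      assert (Ib : In b (a :: l1)) by (apply E; simpl; auto).
      destruct Ia as [->|Ia]; auto. destruct Ib as [->|Ib]; auto.
      specialize (Ha _ Ib). specialize (Hb _ Ia). lra. }
    subst. f_equal. apply IH; auto. intros y. split; intros Hy.
    + assert (In y (b :: l2)) as [<-|H] by (apply E; simpl; auto); auto.
      specialize (Ha _ Hy). lra.
    + assert (In y (b :: l1)) as [<-|H] by (apply E; simpl; auto); auto.
      specialize (Hb _ Hy). lra.
Qed.

Lemma last_nth {A} (l : list A) (d : A) : last l d = nth (length l - 1) l d.
Proof.
  induction l as [|a [|b l] IH]; auto.
  change (last (b :: l) d = nth (length (b :: l)) (a :: b :: l) d).
  rewrite IH. simpl. now rewrite Nat.sub_0_r.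
Qed.

Section Partition.
Variable cs : list R.
Hypothesis Hp : is_partition cs.

Lemma part_len : length cs = S (nb_int cs).
Proof. destruct Hp as [H _]. unfold nb_int. lia. Qed.

Lemma part_first : nth 0 cs 0 = 0.
Proof. apply Hp. Qed.

Lemma part_last : nth (nb_int cs) cs 0 = 1.
Proof. destruct Hp as [_ [_ [H _]]]. now rewrite last_nth in H. Qed.

Lemma part_nth_lt i j : (i < j)%nat -> (j <= nb_int cs)%nat -> nth i cs 0 < nth j cs 0.
Proof. intros. apply Sorted_Rlt_nth; [apply Hp|auto|rewrite part_len; lia]. Qed.

Lemma part_nth_le i j : (i <= j)%nat -> (j <= nb_int cs)%nat -> nth i cs 0 <= nth j cs 0.
Proof. intros. apply Sorted_Rlt_nth_le; [apply Hp|auto|rewrite part_len; lia]. Qed.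

Lemma part_nth_range i : (i <= nb_int cs)%nat -> 0 <= nth i cs 0 <= 1.
Proof.
  intros H. pose proof part_first. pose proof part_last.
  pose proof (part_nth_le 0 i ltac:(lia) H). pose proof (part_nth_le i (nb_int cs) H ltac:(lia)).
  lra.
Qed.

Lemma alpha_lt_bnd j : (j < nb_int cs)%nat -> alpha cs j < bnd cs j.
Proof. intros. apply part_nth_lt; lia. Qed.

Lemma alpha_range j : (j < nb_int cs)%nat -> 0 <= alpha cs j < 1.
Proof.
  intros. unfold alpha. pose proof (part_nth_range j ltac:(lia)).
  pose proof part_last. pose proof (part_nth_lt j (nb_int cs) H ltac:(lia)). lra.
Qed.

Lemma bnd_range j : (j < nb_int cs)%nat -> 0 < bnd cs j <= 1.
Proof.
  intros. pose proof (alpha_range j H). pose proof (alpha_lt_bnd j H).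
  pose proof (part_nth_range (S j) ltac:(lia)). unfold bnd in *. lra.
Qed.

Lemma in_open_X j x : (j < nb_int cs)%nat -> in_open cs j x -> X x.
Proof.
  intros Hj Hx. pose proof (alpha_range j Hj). pose proof (bnd_range j Hj).
  unfold in_open in Hx. unfold X; lra.
Qed.

Lemma alpha_inj j k :
  (j < nb_int cs)%nat -> (k < nb_int cs)%nat -> alpha cs j = alpha cs k -> j = k.
Proof.
  intros Hj Hk E. unfold alpha in E. destruct (lt_eq_lt_dec j k) as [[H|H]|H]; auto.
  - pose proof (part_nth_lt j k H ltac:(lia)). lra.
  - pose proof (part_nth_lt k j H ltac:(lia)). lra.
Qed.

Lemma in_open_unique j k x : (j < nb_int cs)%nat -> (k < nb_int cs)%nat ->
  in_open cs j x -> in_open cs k x -> j = k.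
Proof.
  unfold in_open, alpha, bnd. intros Hj Hk H1 H2.
  destruct (lt_eq_lt_dec j k) as [[H|H]|H]; auto.
  - pose proof (part_nth_le (S j) k H ltac:(lia)). lra.
  - pose proof (part_nth_le (S k) j H ltac:(lia)). lra.
Qed.

Lemma point_ge_bnd y j : In y cs -> (j < nb_int cs)%nat -> alpha cs j < y -> bnd cs j <= y.
Proof.
  intros Hy Hj Hlt. apply (In_nth _ _ 0) in Hy. destruct Hy as [m [Hm <-]].
  rewrite part_len in Hm. unfold alpha, bnd in *.
  destruct (le_lt_dec m j).
  - pose proof (part_nth_le m j l ltac:(lia)). lra.
  - apply part_nth_le; lia.
Qed.

Lemma point_not_in_open y j : In y cs -> (j < nb_int cs)%nat -> ~ in_open cs j y.
Proof. intros Hy Hj [H1 H2]. pose proof (point_ge_bnd y j Hy Hj H1). lra. Qed.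

Lemma alpha_In j : (j < nb_int cs)%nat -> In (alpha cs j) cs.
Proof. intros. apply nth_In. rewrite part_len; lia. Qed.

Lemma bnd_In j : (j < nb_int cs)%nat -> In (bnd cs j) cs.
Proof. intros. apply nth_In. rewrite part_len; lia. Qed.

Lemma point_range y : In y cs -> 0 <= y <= 1.
Proof.
  intros Hy. apply (In_nth _ _ 0) in Hy. destruct Hy as [m [Hm <-]].
  rewrite part_len in Hm. apply part_nth_range; lia.
Qed.

Lemma partition_locate x : 0 <= x < 1 ->
  exists j, (j < nb_int cs)%nat /\ alpha cs j <= x < bnd cs j.
Proof.
  intros Hx. unfold alpha, bnd.
  assert (G : forall m, (m <= nb_int cs)%nat -> nth m cs 0 <= x ->
            exists j, (j < nb_int cs)%nat /\ nth j cs 0 <= x < nth (S j) cs 0).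
  { intros m. remember (nb_int cs - m)%nat as d. revert m Heqd.
    induction d; intros m Hd Hm Hle.
    - replace m with (nb_int cs) in Hle by lia. rewrite part_last in Hle. lra.
    - destruct (Rlt_le_dec x (nth (S m) cs 0)).
      + exists m. split; [lia|lra].
      + apply (IHd (S m)); auto; lia. }
  apply (G 0%nat); [lia|]. rewrite part_first. lra.
Qed.

End Partition.

Lemma is_partition_intro l : Sorted Rlt l -> In 0 l -> In 1 l ->
  (forall y, In y l -> 0 <= y <= 1) -> is_partition l.
Proof.
  intros Hs H0 H1 Hr. pose proof (Sorted_Rlt_strong _ Hs) as Hss.
  assert (Hlen : (2 <= length l)%nat).
  { destruct l as [|a [|b l]]; simpl in *; try tauto; try lia.
    destruct H0, H1; try tauto; subst; lra. }
  split; [auto|split; [|split; [|auto]]].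
  - destruct l as [|a l]; [simpl in H0; tauto|]. simpl.
    destruct H0 as [->|H0]; auto. inversion Hss as [|? ? _ Ha]; subst.
    rewrite Forall_forall in Ha. specialize (Ha _ H0). specialize (Hr a (or_introl eq_refl)).
    lra.
  - rewrite last_nth. apply (In_nth _ _ 0) in H1. destruct H1 as [m [Hm Em]].
    destruct (Nat.eq_dec m (length l - 1)); [subst; auto|].
    pose proof (Sorted_Rlt_nth l Hs m (length l - 1) ltac:(lia) ltac:(lia)).
    pose proof (Hr (nth (length l - 1) l 0) ltac:(apply nth_In; lia)). lra.
Qed.

Lemma refinement_piece P P' : is_partition P -> is_partition P' ->
  (forall y, In y P -> In y P') ->
  forall k, (k < nb_int P')%nat -> exists j, (j < nb_int P)%nat /\
    alpha P j <= alpha P' k /\ bnd P' k <= bnd P j.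
Proof.
  intros HP HP' Hinc k Hk.
  destruct (partition_locate P HP (alpha P' k)) as [j [Hj [H1 H2]]]; [now apply alpha_range|].
  exists j. split; auto. split; auto.
  apply (point_ge_bnd P' HP' (bnd P j) k); auto. apply Hinc, bnd_In; auto.
Qed.

Definition insert_point (cs : list R) (j : nat) (x : R) :=
  firstn (S j) cs ++ x :: skipn (S j) cs.

Lemma insert_point_nth cs j x k : (S j <= length cs)%nat ->
  nth k (insert_point cs j x) 0 = insert_at (S j) (fun k => nth k cs 0) x k.
Proof.
  intros H. unfold insert_point, insert_at.
  destruct (Nat.ltb_spec k (S j)).
  - rewrite app_nth1 by (rewrite firstn_length_le; lia). rewrite nth_firstn.
    now destruct (Nat.ltb_spec k (S j)); [|lia].
  - rewrite app_nth2 by (rewrite firstn_length_le; lia). rewrite firstn_length_le by lia.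
    destruct (Nat.eqb_spec k (S j)).
    + subst. now rewrite Nat.sub_diag.
    + replace (k - S j)%nat with (S (k - S j - 1)) by lia.
      change (nth (k - S j - 1) (skipn (S j) cs) 0 = nth (k - 1) cs 0).
      rewrite nth_skipn. f_equal. lia.
Qed.

Lemma insert_point_length cs j x : (S j <= length cs)%nat ->
  length (insert_point cs j x) = S (length cs).
Proof.
  intros H. unfold insert_point. rewrite length_app, firstn_length_le by lia.
  change (length (x :: skipn (S j) cs)) with (S (length (skipn (S j) cs))).
  rewrite length_skipn. lia.
Qed.

Lemma In_insert_point cs j x y : In y (insert_point cs j x) <-> y = x \/ In y cs.
Proof.
  unfold insert_point. rewrite in_app_iff. simpl.
  rewrite <- (firstn_skipn (S j) cs) at 3. rewrite in_app_iff. intuition.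
Qed.

Lemma insert_point_partition cs j x : is_partition cs -> (j < nb_int cs)%nat ->
  alpha cs j < x < bnd cs j -> is_partition (insert_point cs j x).
Proof.
  intros Hp Hj Hx. pose proof (part_len cs Hp) as Hl.
  apply is_partition_intro.
  - apply Sorted_Rlt_of_nth. intros k Hk. rewrite insert_point_length in Hk by lia.
    rewrite !insert_point_nth by lia. unfold insert_at. unfold alpha, bnd in Hx.
    destruct (Nat.ltb_spec k (S j)), (Nat.ltb_spec (S k) (S j)), (Nat.eqb_spec k (S j)),
      (Nat.eqb_spec (S k) (S j)); try lia.
    + apply part_nth_lt; auto; lia.
    + replace k with j by lia. lra.
    + subst. replace (S (S j) - 1)%nat with (S j) by lia. lra.
    + replace (S k - 1)%nat with k by lia. apply part_nth_lt; auto; lia.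
  - apply In_insert_point. right. rewrite <- (part_first cs Hp). apply nth_In. lia.
  - apply In_insert_point. right. rewrite <- (part_last cs Hp). apply nth_In. lia.
  - intros y Hy. apply In_insert_point in Hy. destruct Hy as [->|Hy].
    + pose proof (alpha_range cs Hp j Hj). pose proof (bnd_range cs Hp j Hj). lra.
    + apply (point_range cs Hp); auto.
Qed.

Lemma bij_X_inj h : bij_X h -> forall x y, X x -> X y -> h x = h y -> x = y.
Proof. intros Hb. apply Hb. Qed.

Definition affine_on (h : R -> R) (a b : R) : Prop :=
  exists s c, (s = 1 \/ s = -1) /\ forall x, a < x < b -> h x = s * x + c.

Definition affine_partition (h : R -> R) (cs : list R) : Prop :=
  is_partition cs /\ forall j, (j < nb_int cs)%nat -> affine_on h (alpha cs j) (bnd cs j).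

Definition img_glb (h : R -> R) (a b : R) : R :=
  real (Glb_Rbar (fun y => exists x, (a < x < b) /\ y = h x)).

Definition decrb (h : R -> R) (a b : R) : bool :=
  if excluded_middle_informative
       (forall x y, a < x < b -> a < y < b -> x < y -> h y < h x)
  then true else false.

(** Left end of the image of ]a, b[ under [x |-> s * x + c] with [s = 1 \/ s = -1]. *)
Definition affine_img_low (s c a b : R) : R := (s * (a + b) - (b - a)) / 2 + c.

Lemma affine_on_sub h a b a' b' : affine_on h a b -> a <= a' -> b' <= b -> affine_on h a' b'.
Proof. intros [s [c [Hs H]]] H1 H2. exists s, c. split; auto. intros x Hx. apply H; lra. Qed.

Lemma affine_image h a b s c : a < b -> (s = 1 \/ s = -1) ->
  (forall x, a < x < b -> h x = s * x + c) ->
  forall y, (exists x, (a < x < b) /\ y = h x) <->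
            affine_img_low s c a b < y < affine_img_low s c a b + (b - a).
Proof.
  intros Hab Hs Hh y. unfold affine_img_low. split.
  - intros [x [Hx ->]]. rewrite Hh by auto. destruct Hs; subst; lra.
  - intros Hy. exists (s * (y - c)).
    assert (Hx : a < s * (y - c) < b) by (destruct Hs; subst; lra).
    split; auto. rewrite Hh by auto. destruct Hs; subst; lra.
Qed.

Lemma Glb_Rbar_open_interval (E : R -> Prop) m M : m < M ->
  (forall y, E y <-> m < y < M) -> real (Glb_Rbar E) = m.
Proof.
  intros HmM HE. rewrite (is_glb_Rbar_unique E (Finite m)); auto. split.
  - intros y Hy. apply HE in Hy. simpl. lra.
  - intros [r| |] Hb; simpl; auto.
    + destruct (Rle_dec r m); auto. exfalso.
      set (y := m + Rmin (r - m) (M - m) / 2).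
      pose proof (Rmin_l (r - m) (M - m)). pose proof (Rmin_r (r - m) (M - m)).
      pose proof (Rmin_glb_lt (r - m) (M - m) 0).
      assert (Hy : m < y < M) by (unfold y; lra).
      specialize (Hb y (proj2 (HE y) Hy)). simpl in Hb. unfold y in Hb. lra.
    + specialize (Hb ((m + M) / 2)). simpl in Hb. apply Hb, HE. lra.
Qed.

Lemma img_glb_affine h a b s c : a < b -> (s = 1 \/ s = -1) ->
  (forall x, a < x < b -> h x = s * x + c) -> img_glb h a b = affine_img_low s c a b.
Proof.
  intros. apply (Glb_Rbar_open_interval _ _ (affine_img_low s c a b + (b - a))); [lra|].
  apply affine_image; auto.
Qed.

Lemma decrb_affine h a b s c : a < b -> (s = 1 \/ s = -1) ->
  (forall x, a < x < b -> h x = s * x + c) -> decrb h a b = Rltb s 0.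
Proof.
  intros Hab Hs Hh. unfold decrb, Rltb.
  destruct (excluded_middle_informative _) as [D|D]; destruct (Rlt_dec s 0); auto.
  - exfalso. assert (s = 1) by (destruct Hs; lra). subst.
    specialize (D (a + (b - a) / 3) (a + 2 * (b - a) / 3) ltac:(lra) ltac:(lra) ltac:(lra)).
    rewrite !Hh in D by lra. lra.
  - exfalso. apply D. intros x y Hx Hy Hxy. rewrite !Hh by auto. destruct Hs; subst; lra.
Qed.

Lemma affine_on_continuous h a b : affine_on h a b -> forall x, a < x < b -> continuity_pt h x.
Proof.
  intros [s [c [_ Hh]]] x Hx.
  apply (continuity_pt_locally_ext (fun y => s * y + c) h (Rmin (x - a) (b - x))).
  - apply Rmin_glb_lt; lra.
  - intros y Hy. unfold Rdist in Hy. pose proof (Rmin_l (x - a) (b - x)).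
    pose proof (Rmin_r (x - a) (b - x)). symmetry. apply Hh.
    unfold Rabs in Hy; destruct (Rcase_abs (y - x)); lra.
  - reg.
Qed.

Lemma continuity_pt_eq_of_approach h l d (E : R -> Prop) :
  continuity_pt h d -> continuity_pt l d ->
  (forall delta, 0 < delta -> exists x, E x /\ Rabs (x - d) < delta) ->
  (forall x, E x -> h x = l x) -> h d = l d.
Proof.
  intros Hh Hl HE Heq.
  destruct (Req_dec (h d) (l d)) as [|Hne]; auto. exfalso.
  assert (Hpos : 0 < Rabs (h d - l d)) by (apply Rabs_pos_lt; lra).
  destruct (continuity_pt_minus h l d Hh Hl _ Hpos) as [delta [Hdelta Hnear]].
  destruct (HE delta Hdelta) as [x [Ex Hx]].
  destruct (Req_dec x d) as [->|Hxd]; [exact (Hne (Heq d Ex))|].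
  specialize (Hnear x (conj (conj I (not_eq_sym Hxd)) Hx)).
  simpl in Hnear. unfold R_dist, minus_fct in Hnear. rewrite (Heq x Ex) in Hnear.
  replace (l x - l x - (h d - l d)) with (- (h d - l d)) in Hnear by ring.
  rewrite Rabs_Ropp in Hnear. lra.
Qed.

Lemma affine_on_merge h p d q : bij_X h -> 0 <= p -> p < d -> d < q -> q <= 1 ->
  affine_on h p d -> affine_on h d q -> continuity_pt h d -> affine_on h p q.
Proof.
  intros Hb Hp Hpd Hdq Hq [s1 [c1 [Hs1 H1]]] [s2 [c2 [Hs2 H2]]] Hc.
  assert (E1 : h d = s1 * d + c1).
  { apply (continuity_pt_eq_of_approach h (fun x => s1 * x + c1) d (fun x => p < x < d));
      auto; [reg|].
    intros delta Hdelta. exists (d - Rmin delta (d - p) / 2).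
    pose proof (Rmin_l delta (d - p)). pose proof (Rmin_r delta (d - p)).
    pose proof (Rmin_glb_lt delta (d - p) 0).
    rewrite Rabs_left; lra. }
  assert (E2 : h d = s2 * d + c2).
  { apply (continuity_pt_eq_of_approach h (fun x => s2 * x + c2) d (fun x => d < x < q));
      auto; [reg|].
    intros delta Hdelta. exists (d + Rmin delta (q - d) / 2).
    pose proof (Rmin_l delta (q - d)). pose proof (Rmin_r delta (q - d)).
    pose proof (Rmin_glb_lt delta (q - d) 0).
    rewrite Rabs_right; lra. }
  destruct (Req_dec s1 s2) as [<-|Es].
  - assert (c1 = c2) as <- by lra.
    exists s1, c1. split; auto. intros x Hx.
    destruct (Rlt_le_dec x d); [apply H1; lra|].
    destruct (Req_dec x d) as [->|]; auto. apply H2; lra.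
  - exfalso. set (t := Rmin (d - p) (q - d) / 2).
    pose proof (Rmin_l (d - p) (q - d)). pose proof (Rmin_r (d - p) (q - d)).
    pose proof (Rmin_glb_lt (d - p) (q - d) 0).
    assert (E : h (d - t) = h (d + t)).
    { rewrite H1, H2 by (unfold t; lra). destruct Hs1, Hs2; subst; lra. }
    apply (bij_X_inj h Hb) in E; unfold X, t in *; lra.
Qed.

Lemma affine_on_of_cuts h (L : list R) : bij_X h -> forall p q, 0 <= p -> p < q -> q <= 1 ->
  (forall x, p < x < q -> continuity_pt h x) ->
  (forall p' q', p <= p' -> p' < q' -> q' <= q -> (forall d, In d L -> ~ p' < d < q') ->
     affine_on h p' q') ->
  affine_on h p q.
Proof.
  intros Hb. induction L as [|d L IH]; intros p q Hp Hpq Hq Hc Hcut.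
  - apply Hcut; simpl; auto; lra.
  - destruct (Rlt_dec p d) as [Hpd|Hpd]; [destruct (Rlt_dec d q) as [Hdq|Hdq]|].
    + apply (affine_on_merge h p d q); auto; apply IH; try lra; try (intros x Hx; apply Hc; lra);
        intros p' q' H1 H2 H3 HL; apply Hcut; try lra;
        intros e [<-|He]; try lra; auto.
    + apply IH; auto. intros p' q' H1 H2 H3 HL. apply Hcut; auto.
      intros e [<-|He]; [lra|auto].
    + apply IH; auto. intros p' q' H1 H2 H3 HL. apply Hcut; auto.
      intros e [<-|He]; [lra|auto].
Qed.

Lemma affine_partition_associated h cs : affine_partition h cs -> associated h cs.
Proof.
  intros [Hp Ha]. split; auto. intros j Hj x Hx.
  apply (affine_on_continuous h (alpha cs j) (bnd cs j)); auto.
Qed.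

Lemma associated_affine_partition h A cs : bij_X h -> affine_partition h A ->
  associated h cs -> affine_partition h cs.
Proof.
  intros Hb [HA HAa] [Hp Hc]. split; auto. intros j Hj.
  pose proof (alpha_range cs Hp j Hj). pose proof (bnd_range cs Hp j Hj).
  pose proof (alpha_lt_bnd cs Hp j Hj).
  apply (affine_on_of_cuts h A Hb); try lra; [intros x Hx; apply (Hc j Hj x Hx)|].
  intros p q Hp1 Hpq Hq1 Hfree.
  destruct (partition_locate A HA p ltac:(lra)) as [k [Hk [K1 K2]]].
  apply (affine_on_sub h (alpha A k) (bnd A k)); auto.
  destruct (Rle_dec q (bnd A k)); auto. exfalso.
  apply (Hfree (bnd A k)); [apply bnd_In|lra]; auto.
Qed.

Lemma refinement_affine_partition h P P' : affine_partition h P -> is_partition P' ->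
  (forall y, In y P -> In y P') -> affine_partition h P'.
Proof.
  intros [HP Ha] HP' Hinc. split; auto. intros k Hk.
  destruct (refinement_piece P P' HP HP' Hinc k Hk) as [j [Hj [H1 H2]]].
  eapply affine_on_sub; eauto.
Qed.

Lemma ex_least_nat (P : nat -> Prop) :
  (exists n, P n) -> exists n, P n /\ forall m, P m -> (n <= m)%nat.
Proof.
  intros [n Hn]. revert Hn. induction n as [n IH] using lt_wf_ind. intros Hn.
  destruct (excluded_middle_informative (exists m, (m < n)%nat /\ P m)) as [[m [Hm Pm]]|N].
  - apply (IH m); auto.
  - exists n. split; auto. intros m Pm. destruct (le_lt_dec n m); auto.
    exfalso. apply N. eauto.
Qed.

Lemma Pmin_associated h : (exists cs, associated h cs) -> associated h (Pmin h).
Proof.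
  intros [cs0 H0]. unfold Pmin.
  apply (epsilon_spec (inhabits nil) (fun cs => associated h cs /\
     forall cs', associated h cs' -> (length cs <= length cs')%nat)).
  destruct (ex_least_nat (fun n => exists cs, associated h cs /\ length cs = n))
    as [n [[cs [H1 H2]] H3]]; [eauto|].
  exists cs. split; auto. intros cs' H'. rewrite H2. apply H3. eauto.
Qed.

Lemma Pmin_affine_partition h : bij_X h -> (exists A, affine_partition h A) ->
  affine_partition h (Pmin h).
Proof.
  intros Hb [A HA]. apply (associated_affine_partition h A); auto.
  apply Pmin_associated. exists A. now apply affine_partition_associated.
Qed.

Lemma IET_affine_partition f : IET f -> exists cs, affine_partition f cs.
Proof.
  intros [_ [cs [Hp H]]]. exists cs. split; auto. intros j Hj.
  destruct (H j Hj) as [[c Hc]|[c Hc]]; [exists 1, c|exists (-1), c]; split; auto;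
    intros x Hx; rewrite Hc by exact Hx; ring.
Qed.

Definition img_end (h : R -> R) (cs : list R) (j : nat) : R :=
  beta h cs j + (bnd cs j - alpha cs j).

Section Tiling.
Variable h : R -> R.
Variable cs : list R.
Hypothesis Hb : bij_X h.
Hypothesis Ha : affine_partition h cs.

Let Hp : is_partition cs := proj1 Ha.

Lemma beta_affine j : (j < nb_int cs)%nat -> exists s c, (s = 1 \/ s = -1) /\
   (forall x, alpha cs j < x < bnd cs j -> h x = s * x + c) /\
   beta h cs j = affine_img_low s c (alpha cs j) (bnd cs j).
Proof.
  intros Hj. destruct (proj2 Ha j Hj) as [s [c [Hs Hh]]]. exists s, c.
  split; auto. split; auto. apply img_glb_affine; auto. apply alpha_lt_bnd; auto.
Qed.

Lemma piece_image j : (j < nb_int cs)%nat -> forall y,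
  (exists x, in_open cs j x /\ y = h x) <-> beta h cs j < y < img_end h cs j.
Proof.
  intros Hj y. destruct (beta_affine j Hj) as [s [c [Hs [Hh Hbeta]]]].
  unfold img_end, in_open. rewrite Hbeta. apply affine_image; auto. apply alpha_lt_bnd; auto.
Qed.

Lemma beta_lt_img_end j : (j < nb_int cs)%nat -> beta h cs j < img_end h cs j.
Proof. intros Hj. unfold img_end. pose proof (alpha_lt_bnd cs Hp j Hj). lra. Qed.

Lemma piece_image_range j : (j < nb_int cs)%nat -> 0 <= beta h cs j /\ img_end h cs j <= 1.
Proof.
  intros Hj. pose proof (beta_lt_img_end j Hj).
  assert (Hin : forall y, beta h cs j < y < img_end h cs j -> 0 <= y < 1).
  { intros y Hy. apply (piece_image j Hj) in Hy. destruct Hy as [x [Hx ->]].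
    apply Hb. apply (in_open_X cs Hp j); auto. }
  split.
  - destruct (Rle_dec 0 (beta h cs j)) as [|N]; auto. exfalso.
    pose proof (Rmin_l 0 (img_end h cs j)). pose proof (Rmin_r 0 (img_end h cs j)).
    pose proof (Rmin_glb_lt 0 (img_end h cs j) (beta h cs j)).
    specialize (Hin ((beta h cs j + Rmin 0 (img_end h cs j)) / 2) ltac:(lra)). lra.
  - destruct (Rle_dec (img_end h cs j) 1) as [|N]; auto. exfalso.
    pose proof (Rmax_l 1 (beta h cs j)). pose proof (Rmax_r 1 (beta h cs j)).
    pose proof (Rmax_lub_lt 1 (beta h cs j) (img_end h cs j)).
    specialize (Hin ((Rmax 1 (beta h cs j) + img_end h cs j) / 2) ltac:(lra)). lra.
Qed.

Lemma piece_image_unique j k y : (j < nb_int cs)%nat -> (k < nb_int cs)%nat ->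
  beta h cs j < y < img_end h cs j -> beta h cs k < y < img_end h cs k -> j = k.
Proof.
  intros Hj Hk H1 H2. apply (piece_image j Hj) in H1. apply (piece_image k Hk) in H2.
  destruct H1 as [x1 [Hx1 ->]]. destruct H2 as [x2 [Hx2 E]].
  apply (bij_X_inj h Hb) in E; [subst|apply (in_open_X cs Hp j)|apply (in_open_X cs Hp k)]; auto.
  apply (in_open_unique cs Hp j k x2); auto.
Qed.

Lemma beta_in_piece_image j k : (j < nb_int cs)%nat -> (k < nb_int cs)%nat ->
  beta h cs k <= beta h cs j < img_end h cs k -> j = k.
Proof.
  intros Hj Hk H. pose proof (beta_lt_img_end j Hj).
  set (m := Rmin (img_end h cs k - beta h cs j) (img_end h cs j - beta h cs j)).
  pose proof (Rmin_l (img_end h cs k - beta h cs j) (img_end h cs j - beta h cs j)).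
  pose proof (Rmin_r (img_end h cs k - beta h cs j) (img_end h cs j - beta h cs j)).
  assert (0 < m) by (apply Rmin_glb_lt; lra).
  apply (piece_image_unique j k (beta h cs j + m / 2)); auto; unfold m in *; lra.
Qed.

Lemma beta_not_in_piece_image j k : (j < nb_int cs)%nat -> (k < nb_int cs)%nat ->
  ~ (beta h cs k < beta h cs j < img_end h cs k).
Proof.
  intros Hj Hk H. destruct (Nat.eq_dec j k) as [->|Hne]; [lra|].
  apply Hne, beta_in_piece_image; auto; lra.
Qed.

Lemma beta_inj : inj_below (nb_int cs) (beta h cs).
Proof.
  intros j k Hj Hk E. apply beta_in_piece_image; auto. pose proof (beta_lt_img_end k Hk). lra.
Qed.

Lemma h_alpha_inj : inj_below (nb_int cs) (fun j => h (alpha cs j)).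
Proof.
  intros j k Hj Hk E. pose proof (alpha_range cs Hp j Hj). pose proof (alpha_range cs Hp k Hk).
  apply (bij_X_inj h Hb) in E; [apply (alpha_inj cs Hp)|unfold X; lra|unfold X; lra]; auto.
Qed.

Lemma outside_piece_images y : X y ->
  (forall k, (k < nb_int cs)%nat -> ~ (beta h cs k < y < img_end h cs k)) ->
  exists k, (k < nb_int cs)%nat /\ y = h (alpha cs k).
Proof.
  intros Hy Hn. destruct Hb as [_ [_ Hs]]. destruct (Hs y Hy) as [x [Hx <-]].
  destruct (partition_locate cs Hp x Hx) as [k [Hk [[H1|H1] H2]]];
    exists k; split; auto; [|now rewrite H1].
  exfalso. apply (Hn k Hk), (piece_image k Hk). exists x. split; auto. split; auto.
Qed.

Lemma beta_perm_h_alpha : exists rho, is_perm (nb_int cs) rho /\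
  forall j, (j < nb_int cs)%nat -> beta h cs j = h (alpha cs (rho j)).
Proof.
  destruct (finite_choice (nb_int cs)
              (fun j k => (k < nb_int cs)%nat /\ beta h cs j = h (alpha cs k))) as [rho Hr].
  { intros j Hj. apply outside_piece_images.
    - pose proof (piece_image_range j Hj). pose proof (beta_lt_img_end j Hj). unfold X; lra.
    - intros k Hk. apply beta_not_in_piece_image; auto. }
  exists rho. split; [split|].
  - intros i Hi. apply Hr; auto.
  - intros i j Hi Hj E. apply beta_inj; auto.
    rewrite (proj2 (Hr i Hi)), (proj2 (Hr j Hj)), E. reflexivity.
  - intros j Hj. apply Hr; auto.
Qed.

Lemma img_end_is_beta j : (j < nb_int cs)%nat -> img_end h cs j < 1 ->
  exists m, (m < nb_int cs)%nat /\ img_end h cs j = beta h cs m.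
Proof.
  intros Hj He. pose proof (beta_lt_img_end j Hj).
  destruct (outside_piece_images (img_end h cs j)) as [k [Hk E]].
  - pose proof (piece_image_range j Hj). unfold X; lra.
  - intros k Hk Hin. assert (j = k) as <-; [|lra].
    set (m := Rmin (img_end h cs j - beta h cs j) (img_end h cs j - beta h cs k)).
    pose proof (Rmin_l (img_end h cs j - beta h cs j) (img_end h cs j - beta h cs k)).
    pose proof (Rmin_r (img_end h cs j - beta h cs j) (img_end h cs j - beta h cs k)).
    assert (0 < m) by (apply Rmin_glb_lt; lra).
    apply (piece_image_unique j k (img_end h cs j - m / 2)); auto; unfold m in *; lra.
  - destruct beta_perm_h_alpha as [rho [Hr Hrv]].
    destruct (is_perm_surj _ rho Hr k Hk) as [m [Hm <-]].
    exists m. split; auto. rewrite E, Hrv; auto.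
Qed.

Lemma h_in_open_neq_h_alpha x j i : (j < nb_int cs)%nat -> (i < nb_int cs)%nat ->
  in_open cs j x -> h x <> h (alpha cs i).
Proof.
  intros Hj Hi Hx E. pose proof (alpha_range cs Hp i Hi).
  apply (bij_X_inj h Hb) in E; [subst|apply (in_open_X cs Hp j)|unfold X; lra]; auto.
  apply (point_not_in_open cs Hp (alpha cs i) j); auto. apply alpha_In; auto.
Qed.

Lemma h_in_open_neq_beta x j i : (j < nb_int cs)%nat -> (i < nb_int cs)%nat ->
  in_open cs j x -> h x <> beta h cs i.
Proof.
  intros Hj Hi Hx E. assert (Hin : beta h cs j < h x < img_end h cs j)
    by (apply piece_image; eauto).
  rewrite E in Hin. apply (beta_not_in_piece_image i j); auto.
Qed.

End Tiling.

Lemma eps_P_xsum h cs : eps_P h cs =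
  xorb (xsum (seq 0 (nb_int cs)) (fun j => decrb h (alpha cs j) (bnd cs j)))
       (inv_par (nb_int cs) (fun i => h (alpha cs i)) (beta h cs)).
Proof.
  unfold eps_P, sgn_sigma, sigma_inversions, Rnum, indices.
  now rewrite odd_length_filter, odd_length_filter_prod.
Qed.

Definition insert_two {A} (j : nat) (f : nat -> A) (y0 y1 : A) (k : nat) : A :=
  if Nat.ltb k j then f k
  else if Nat.eqb k j then y0 else if Nat.eqb k (S j) then y1 else f (k - 1)%nat.

Lemma insert_two_insert_at {A} j (f : nat -> A) y k :
  insert_two j f (f j) y k = insert_at (S j) f y k.
Proof.
  unfold insert_two, insert_at.
  destruct (Nat.ltb_spec k j), (Nat.ltb_spec k (S j)), (Nat.eqb_spec k j),
    (Nat.eqb_spec k (S j)); subst; auto; lia.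
Qed.

Lemma nb_int_insert_point cs j x :
  (j < nb_int cs)%nat -> nb_int (insert_point cs j x) = S (nb_int cs).
Proof. unfold nb_int. intros. rewrite insert_point_length; lia. Qed.

Lemma insert_point_piece {A} cs j x (G : R -> R -> A) k : (j < nb_int cs)%nat ->
  G (alpha (insert_point cs j x) k) (bnd (insert_point cs j x) k) =
  insert_two j (fun k => G (alpha cs k) (bnd cs k)) (G (alpha cs j) x) (G x (bnd cs j)) k.
Proof.
  unfold nb_int. intros H. unfold alpha, bnd. rewrite !insert_point_nth by lia.
  unfold insert_two, insert_at.
  repeat match goal with
         | |- context [Nat.ltb ?a ?b] => destruct (Nat.ltb_spec a b)
         | |- context [Nat.eqb ?a ?b] => destruct (Nat.eqb_spec a b)
         end; try lia; try reflexivity; subst; repeat f_equal; lia.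
Qed.

Lemma insert_point_affine_partition h cs j x : affine_partition h cs ->
  (j < nb_int cs)%nat -> alpha cs j < x < bnd cs j ->
  affine_partition h (insert_point cs j x).
Proof.
  intros Ha Hj Hx. apply (refinement_affine_partition h cs); auto.
  - apply insert_point_partition; auto. apply Ha.
  - intros y Hy. apply In_insert_point; auto.
Qed.

Section Insertion.
Variables (h : R -> R) (cs : list R) (j : nat) (x : R).
Hypothesis Hb : bij_X h.
Hypothesis Ha : affine_partition h cs.
Hypothesis Hj : (j < nb_int cs)%nat.
Hypothesis Hx : alpha cs j < x < bnd cs j.

Let n := nb_int cs.
Let cs' := insert_point cs j x.
Let Hn' : nb_int cs' = S n := nb_int_insert_point cs j x Hj.
Let Ha' : affine_partition h cs' := insert_point_affine_partition h cs j x Ha Hj Hx.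

Lemma h_alpha_insert_point k :
  h (alpha cs' k) = insert_at (S j) (fun i => h (alpha cs i)) (h x) k.
Proof.
  rewrite <- insert_two_insert_at. apply (insert_point_piece cs j x (fun a _ => h a) k Hj).
Qed.

Lemma inv_par_insert_point_at v : (forall i, (i < n)%nat -> h x <> v i) ->
  (exists rho, is_perm n rho /\ forall i, (i < n)%nat -> v i = h (alpha cs (rho i))) ->
  inv_par (S n) (fun k => h (alpha cs' k)) (insert_at (S j) v (h x)) =
  inv_par n (fun i => h (alpha cs i)) v.
Proof.
  intros Hv [rho [Hrho Hrv]].
  rewrite <- (inv_par_insert_at n (S j) rho _ v (h x)); auto.
  - apply xsum2_ext. intros i k _ _. unfold discord. now rewrite !h_alpha_insert_point.
  - intros i Hi. apply (h_in_open_neq_h_alpha h cs Hb Ha x j i); auto.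
Qed.

Section Slope.
Variables s c : R.
Hypothesis Hs : s = 1 \/ s = -1.
Hypothesis Hh : forall y, alpha cs j < y < bnd cs j -> h y = s * y + c.

Let Hab : alpha cs j < bnd cs j := alpha_lt_bnd cs (proj1 Ha) j Hj.

Lemma xsum_decrb_insert_point :
  xsum (seq 0 (S n)) (fun k => decrb h (alpha cs' k) (bnd cs' k)) =
  xorb (xsum (seq 0 n) (fun k => decrb h (alpha cs k) (bnd cs k))) (Rltb s 0).
Proof.
  rewrite (xsum_ext_in _ _
    (insert_at (S j) (fun k => decrb h (alpha cs k) (bnd cs k)) (Rltb s 0))).
  - apply xsum_insert_at. unfold n. lia.
  - intros k _. unfold cs'. rewrite (insert_point_piece cs j x (decrb h) k Hj).
    rewrite <- insert_two_insert_at.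
    rewrite !(decrb_affine h _ _ s c) by (auto; try lra; intros; apply Hh; lra).
    reflexivity.
Qed.

Lemma beta_insert_point k : beta h cs' k =
  insert_two j (beta h cs) (affine_img_low s c (alpha cs j) x)
    (affine_img_low s c x (bnd cs j)) k.
Proof.
  change (beta h cs' k) with (img_glb h (alpha cs' k) (bnd cs' k)).
  unfold cs'. rewrite (insert_point_piece cs j x (img_glb h) k Hj).
  rewrite !(img_glb_affine h _ _ s c) by (auto; try lra; intros; apply Hh; lra).
  reflexivity.
Qed.

Let Hbeta_j : beta h cs j = affine_img_low s c (alpha cs j) (bnd cs j) :=
  img_glb_affine h _ _ s c Hab Hs Hh.
Let Hhx : h x = s * x + c := Hh x Hx.

Lemma beta_insert_point_incr : s = 1 -> forall k,
  beta h cs' k = insert_at (S j) (beta h cs) (h x) k.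
Proof.
  intros Hs1 k. rewrite beta_insert_point, <- insert_two_insert_at.
  f_equal; [rewrite Hbeta_j|rewrite Hhx]; unfold affine_img_low; rewrite Hs1; lra.
Qed.

Lemma beta_insert_point_decr : s = -1 -> forall k,
  beta h cs' k = insert_at (S j) (beta h cs) (h x) (swap_next j k).
Proof.
  intros Hs1 k. rewrite beta_insert_point. unfold insert_two, insert_at, swap_next.
  destruct (Nat.eqb_spec k j) as [->|Hkj]; [|destruct (Nat.eqb_spec k (S j)) as [->|Hksj]];
    repeat match goal with
           | |- context [Nat.ltb ?a ?b] => destruct (Nat.ltb_spec a b)
           | |- context [Nat.eqb ?a ?b] => destruct (Nat.eqb_spec a b)
           end; try lia; try reflexivity;
    rewrite ?Hbeta_j, ?Hhx; unfold affine_img_low; rewrite Hs1; lra.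
Qed.

End Slope.

Lemma eps_P_insert_point : eps_P h cs' = eps_P h cs.
Proof.
  destruct (proj2 Ha j Hj) as [s [c [Hs Hh]]].
  rewrite !eps_P_xsum, Hn'. fold n. rewrite (xsum_decrb_insert_point s c) by auto.
  assert (Hins : inv_par (S n) (fun k => h (alpha cs' k)) (insert_at (S j) (beta h cs) (h x))
                 = inv_par n (fun i => h (alpha cs i)) (beta h cs)).
  { apply inv_par_insert_point_at; [|apply beta_perm_h_alpha; auto].
    intros i Hi. apply (h_in_open_neq_beta h cs Hb Ha x j i); auto. }
  destruct (Hs) as [Hs1|Hs1].
  - rewrite <- Hins. f_equal.
    + rewrite Hs1. unfold Rltb. destruct (Rlt_dec 1 0); [lra|]. apply xorb_false_r.
    + apply xsum2_ext. intros i k _ _. unfold discord.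
      now rewrite !(beta_insert_point_incr s c Hs Hh Hs1).
  - (* the two halves of piece [j] are both decreasing and their images are swapped *)
    set (w := insert_at (S j) (beta h cs) (h x)) in Hins.
    assert (Htau : is_perm (S n) (swap_next j)) by (apply swap_next_is_perm; unfold n; lia).
    assert (Hbeta' : forall k, beta h cs' k = w (swap_next j k))
      by exact (beta_insert_point_decr s c Hs Hh Hs1).
    assert (Hu' : inj_below (S n) (fun k => h (alpha cs' k)))
      by (rewrite <- Hn'; apply h_alpha_inj; auto).
    assert (Hv' : inj_below (S n) (beta h cs')) by (rewrite <- Hn'; apply beta_inj; auto).
    assert (Hw : inj_below (S n) w).
    { intros i k Hi Hk E. rewrite <- (swap_next_involutive j i), <- (swap_next_involutive j k).
      f_equal. apply Hv'; try apply Htau; auto. now rewrite !Hbeta', !swap_next_involutive. }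
    assert (Hwt : inj_below (S n) (fun k => w (swap_next j k))).
    { intros i k Hi Hk E. apply Hv'; auto. now rewrite !Hbeta'. }
    replace (inv_par (S n) (fun i => h (alpha cs' i)) (beta h cs'))
      with (inv_par (S n) (fun i => h (alpha cs' i)) (fun k => w (swap_next j k)))
      by (apply xsum2_ext; intros i k _ _; unfold discord; now rewrite !Hbeta').
    rewrite (inv_par_trans _ _ w) by auto.
    rewrite (inv_par_relabel _ w INR), inv_par_swap_next, Hins
      by (auto using inj_below_INR; unfold n; lia).
    rewrite Hs1. unfold Rltb. destruct (Rlt_dec (-1) 0); [|lra].
    destruct (xsum _ _), (inv_par n (fun i => h (alpha cs i)) (beta h cs)); reflexivity.
Qed.

End Insertion.

Inductive insertion_refines : list R -> list R -> Prop :=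
| insertion_refines_refl cs : insertion_refines cs cs
| insertion_refines_step cs j x cs' : (j < nb_int cs)%nat -> alpha cs j < x < bnd cs j ->
    insertion_refines (insert_point cs j x) cs' -> insertion_refines cs cs'.

Lemma insertion_refines_partition cs cs' :
  is_partition cs -> insertion_refines cs cs' -> is_partition cs'.
Proof.
  intros Hp Hr. induction Hr as [|cs j x cs' Hj Hx _ IH]; auto.
  apply IH, insert_point_partition; auto.
Qed.

Lemma insertion_refines_eps_P h cs cs' : bij_X h -> affine_partition h cs ->
  insertion_refines cs cs' -> affine_partition h cs' /\ eps_P h cs' = eps_P h cs.
Proof.
  intros Hb Ha Hr. induction Hr as [|cs j x cs' Hj Hx _ IH]; auto.
  destruct IH as [Ha' ->]; [apply insert_point_affine_partition; auto|].
  split; auto. apply eps_P_insert_point; auto.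
Qed.

Lemma ex_insertion_refines L : forall cs, is_partition cs -> (forall y, In y L -> 0 <= y <= 1) ->
  exists cs', insertion_refines cs cs' /\ forall y, In y cs' <-> In y cs \/ In y L.
Proof.
  induction L as [|y L IH]; intros cs Hp HL.
  - exists cs. split; [constructor|]. simpl. tauto.
  - destruct (excluded_middle_informative (In y cs)) as [Hy|Hy].
    + destruct (IH cs Hp) as [cs' [Hr Hin]]; [intros z Hz; apply HL; simpl; auto|].
      exists cs'. split; auto. intros z. rewrite Hin. simpl. intuition congruence.
    + assert (Hy1 : 0 <= y < 1).
      { destruct (HL y (or_introl eq_refl)) as [H0 [H1| ->]]; [lra|].
        exfalso. apply Hy. rewrite <- (part_last cs Hp). apply nth_In.
        rewrite (part_len cs Hp). lia. }
      destruct (partition_locate cs Hp y Hy1) as [j [Hj [[H1| <-] H2]]];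
        [|exfalso; apply Hy, alpha_In; auto].
      destruct (IH (insert_point cs j y)) as [cs' [Hr Hin]].
      * apply insert_point_partition; auto.
      * intros z Hz. apply HL. simpl; auto.
      * exists cs'. split; [apply (insertion_refines_step cs j y); auto|].
        intros z. rewrite Hin, In_insert_point. simpl. intuition.
Qed.

Lemma eps_P_indep h P1 P2 : bij_X h -> affine_partition h P1 -> affine_partition h P2 ->
  eps_P h P1 = eps_P h P2.
Proof.
  intros Hb H1 H2.
  destruct (ex_insertion_refines P2 P1 (proj1 H1)) as [c1 [R1 I1]].
  { apply (point_range P2 (proj1 H2)). }
  destruct (ex_insertion_refines P1 P2 (proj1 H2)) as [c2 [R2 I2]].
  { apply (point_range P1 (proj1 H1)). }
  assert (c1 = c2) as <-.
  { destruct (insertion_refines_partition P1 c1 (proj1 H1) R1) as [_ [_ [_ S1]]].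
    destruct (insertion_refines_partition P2 c2 (proj1 H2) R2) as [_ [_ [_ S2]]].
    apply Sorted_Rlt_ext; auto. intros y. rewrite I1, I2. tauto. }
  destruct (insertion_refines_eps_P h P1 c1 Hb H1 R1) as [_ <-].
  destruct (insertion_refines_eps_P h P2 c1 Hb H2 R2) as [_ <-].
  reflexivity.
Qed.

Lemma eps_eq_eps_P h P : bij_X h -> affine_partition h P -> eps h = eps_P h P.
Proof.
  intros Hb HP. apply eps_P_indep; auto. apply Pmin_affine_partition; eauto.
Qed.

Lemma Rltb_sign_mul s t : (s = 1 \/ s = -1) -> (t = 1 \/ t = -1) ->
  Rltb (s * t) 0 = xorb (Rltb t 0) (Rltb s 0).
Proof.
  intros [-> | ->] [-> | ->]; unfold Rltb; repeat destruct (Rlt_dec _ _); simpl; auto; lra.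
Qed.

Lemma affine_on_comp f g a b s c : a < b -> (s = 1 \/ s = -1) ->
  (forall x, a < x < b -> g x = s * x + c) ->
  affine_on f (affine_img_low s c a b) (affine_img_low s c a b + (b - a)) ->
  affine_on (fun x => f (g x)) a b /\
  decrb (fun x => f (g x)) a b =
    xorb (decrb g a b) (decrb f (affine_img_low s c a b) (affine_img_low s c a b + (b - a))) /\
  img_glb (fun x => f (g x)) a b =
    img_glb f (affine_img_low s c a b) (affine_img_low s c a b + (b - a)).
Proof.
  intros Hab Hs Hg [t [d [Ht Hf]]].
  assert (Hfg : forall x, a < x < b -> f (g x) = (t * s) * x + (t * c + d)).
  { intros x Hx. rewrite Hf; [rewrite Hg by auto; ring|].
    apply (affine_image g a b s c); eauto. }
  assert (Hts : t * s = 1 \/ t * s = -1) by (destruct Hs, Ht; subst; lra).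
  pose proof (affine_image g a b s c Hab Hs Hg).
  split; [exists (t * s), (t * c + d); auto|split].
  - rewrite (decrb_affine _ _ _ _ _ Hab Hts Hfg), (decrb_affine _ _ _ _ _ Hab Hs Hg),
      (decrb_affine f _ _ t d); auto; [apply Rltb_sign_mul; auto|lra].
  - rewrite (img_glb_affine _ _ _ _ _ Hab Hts Hfg), (img_glb_affine f _ _ t d); auto; [|lra].
    unfold affine_img_low. destruct Hs, Ht; subst; lra.
Qed.

Lemma ex_preimage_list g F : bij_X g -> exists L, (forall x, In x L -> X x) /\
  forall y, In y F -> X y -> exists x, In x L /\ g x = y.
Proof.
  intros [_ [_ Hs]]. induction F as [|y F [L [HLX HL]]].
  - exists nil. split; intros y [].
  - destruct (excluded_middle_informative (X y)) as [Hy|Hy].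
    + destruct (Hs y Hy) as [x [Hx <-]]. exists (x :: L). split.
      * intros z [<-|Hz]; auto.
      * intros z [<-|Hz] Hz'; [exists x; simpl; auto|].
        destruct (HL z Hz Hz') as [x' [? ?]]. exists x'. simpl; auto.
    + exists L. split; auto. intros z [<-|Hz] Hz'; [contradiction|auto].
Qed.

(** Refine the partition of [g] by the [g]-preimages of the cut points of [f]. *)
Lemma ex_adapted_partition f g F G : bij_X g -> affine_partition f F -> affine_partition g G ->
  exists P, affine_partition g P /\
    forall j, (j < nb_int P)%nat -> affine_on f (beta g P j) (img_end g P j).
Proof.
  intros Hg HF HG. destruct (ex_preimage_list g F Hg) as [L [HLX HL]].
  destruct (ex_insertion_refines L G (proj1 HG)) as [P [HR HInP]].
  { intros y Hy. specialize (HLX y Hy). unfold X in HLX. lra. }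
  assert (HPg : affine_partition g P).
  { apply (refinement_affine_partition g G); auto.
    - apply (insertion_refines_partition G); auto. apply HG.
    - intros y Hy. apply HInP; auto. }
  exists P. split; auto. intros j Hj.
  assert (NoF : forall d, In d F -> ~ beta g P j < d < img_end g P j).
  { intros d Hd Hdin. apply (piece_image g P HPg j Hj) in Hdin.
    destruct Hdin as [x [Hx ->]].
    assert (Xx : X x) by (apply (in_open_X P (proj1 HPg) j); auto).
    destruct (HL (g x) Hd (proj1 Hg x Xx)) as [x' [Hx'L Ex']].
    apply (bij_X_inj g Hg) in Ex'; auto. subst x'.
    apply (point_not_in_open P (proj1 HPg) x j); auto. apply HInP; auto. }
  pose proof (piece_image_range g P Hg HPg j Hj). pose proof (beta_lt_img_end g P HPg j Hj).
  destruct (partition_locate F (proj1 HF) (beta g P j)) as [k [Hk [K1 K2]]]; [lra|].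
  apply (affine_on_sub f (alpha F k) (bnd F k)); [apply HF; auto|lra|].
  destruct (Rle_dec (img_end g P j) (bnd F k)); auto. exfalso.
  apply (NoF (bnd F k)); [apply bnd_In; auto; apply HF|lra].
Qed.

Section ImagePartition.
Variable h : R -> R.
Variable cs : list R.
Hypothesis Hb : bij_X h.
Hypothesis Ha : affine_partition h cs.

Let n := nb_int cs.

Lemma beta_eq_0 : exists m, (m < n)%nat /\ beta h cs m = 0.
Proof.
  destruct (outside_piece_images h cs Hb Ha 0) as [k [Hk Ek]].
  - unfold X; lra.
  - intros k Hk Hin. pose proof (piece_image_range h cs Hb Ha k Hk). lra.
  - destruct (beta_perm_h_alpha h cs Hb Ha) as [rho [Hrho Hrv]].
    destruct (is_perm_surj _ rho Hrho k Hk) as [m [Hm <-]].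
    exists m. split; auto. rewrite Hrv; auto.
Qed.

Lemma ex_image_points_partition : exists Q, is_partition Q /\
  forall y, In y Q <-> y = 1 \/ exists j, (j < n)%nat /\ y = beta h cs j.
Proof.
  assert (H01 : is_partition [0; 1]).
  { apply is_partition_intro; simpl; auto.
    - repeat constructor. lra.
    - intros y [<-|[<-|[]]]; lra. }
  destruct (ex_insertion_refines (map (beta h cs) (seq 0 n)) [0; 1] H01) as [Q [HR HQ]].
  { intros y Hy. apply in_map_iff in Hy. destruct Hy as [j [<- Hj]]. apply in_seq in Hj.
    pose proof (piece_image_range h cs Hb Ha j ltac:(unfold n in *; lia)).
    pose proof (beta_lt_img_end h cs Ha j ltac:(unfold n in *; lia)). lra. }
  exists Q. split; [apply (insertion_refines_partition [0; 1]); auto|].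
  intros y. rewrite HQ, in_map_iff. simpl.
  destruct beta_eq_0 as [m [Hm Em]]. split.
  - intros [[<-|[<-|[]]]|[j [<- Hj]]]; auto.
    + right. exists m. auto.
    + right. apply in_seq in Hj. exists j. split; [lia|auto].
  - intros [<-|[j [Hj ->]]]; auto. right. exists j. split; auto. apply in_seq; lia.
Qed.

Section Points.
Variable Q : list R.
Hypothesis HQ : is_partition Q.
Hypothesis HinQ : forall y, In y Q <-> y = 1 \/ exists j, (j < n)%nat /\ y = beta h cs j.

Lemma image_points_nb_int : nb_int Q = n.
Proof.
  assert (Perm : Permutation Q (1 :: map (beta h cs) (seq 0 n))).
  { apply NoDup_Permutation; [apply Sorted_Rlt_NoDup, HQ|constructor|].
    - rewrite in_map_iff. intros [j [E Hj]]. apply in_seq in Hj.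
      pose proof (piece_image_range h cs Hb Ha j ltac:(unfold n in *; lia)).
      pose proof (beta_lt_img_end h cs Ha j ltac:(unfold n in *; lia)). lra.
    - apply NoDup_map_NoDup_ForallPairs; [|apply seq_NoDup].
      intros i j Hi Hj E. apply in_seq in Hi, Hj. apply (beta_inj h cs Hb Ha); auto; lia.
    - intros y. rewrite HinQ. simpl. rewrite in_map_iff. split.
      + intros [A|[j [Hj A]]]; auto. right. exists j. split; auto. apply in_seq; lia.
      + intros [A|[j [A Hj]]]; auto. right. apply in_seq in Hj. exists j. split; auto; lia. }
  apply Permutation_length in Perm. simpl in Perm. rewrite length_map, length_seq in Perm.
  unfold nb_int. lia.
Qed.

Lemma image_points_piece j : (j < n)%nat ->
  exists k, (k < n)%nat /\ alpha Q k = beta h cs j /\ bnd Q k = img_end h cs j.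
Proof.
  intros Hj. pose proof (piece_image_range h cs Hb Ha j Hj).
  pose proof (beta_lt_img_end h cs Ha j Hj). pose proof image_points_nb_int as HnQ.
  assert (Hin : In (beta h cs j) Q) by (apply HinQ; right; eauto).
  apply (In_nth _ _ 0) in Hin. destruct Hin as [k [Hk Ek]].
  rewrite (part_len Q HQ), HnQ in Hk.
  assert (k <> n) by (intros ->; pose proof (part_last Q HQ); rewrite HnQ in *; lra).
  exists k. split; [lia|]. split; [exact Ek|].
  assert (Hend : In (img_end h cs j) Q).
  { apply HinQ. destruct (Req_dec (img_end h cs j) 1); auto. right.
    apply (img_end_is_beta h cs Hb Ha j Hj). lra. }
  apply Rle_antisym.
  - apply (point_ge_bnd Q HQ); auto; [lia|]. unfold alpha. rewrite Ek. lra.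
  - assert (Hlt : beta h cs j < bnd Q k) by (rewrite <- Ek; apply alpha_lt_bnd; auto; lia).
    assert (Hbnd : In (bnd Q k) Q) by (apply bnd_In; auto; lia).
    apply HinQ in Hbnd. destruct Hbnd as [E|[m [Hm E]]]; rewrite E in *; [lra|].
    destruct (Rle_dec (img_end h cs j) (beta h cs m)); auto. exfalso.
    apply (beta_not_in_piece_image h cs Hb Ha m j); auto. lra.
Qed.

End Points.

Lemma image_partition : exists Q pi, is_partition Q /\ nb_int Q = n /\ is_perm n pi /\
  forall j, (j < n)%nat -> alpha Q (pi j) = beta h cs j /\ bnd Q (pi j) = img_end h cs j.
Proof.
  destruct ex_image_points_partition as [Q [HQ HinQ]].
  destruct (finite_choice n (fun j k => (k < n)%nat /\
              alpha Q k = beta h cs j /\ bnd Q k = img_end h cs j)) as [pi Hpi].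
  { apply image_points_piece; auto. }
  exists Q, pi. split; auto. split; [apply image_points_nb_int; auto|]. split.
  - split; [apply Hpi|]. intros i j Hi Hj E. apply (beta_inj h cs Hb Ha); auto.
    destruct (Hpi i Hi) as [_ [<- _]]. destruct (Hpi j Hj) as [_ [<- _]]. now rewrite E.
  - intros j Hj. apply Hpi; auto.
Qed.

End ImagePartition.

Lemma bij_X_comp f g : bij_X f -> bij_X g -> bij_X (fun x => f (g x)).
Proof.
  intros [F1 [F2 F3]] [G1 [G2 G3]]. split; [|split].
  - intros x Hx. apply F1, G1, Hx.
  - intros x y Hx Hy E. apply (G2 x y Hx Hy), (F2 (g x) (g y) (G1 x Hx) (G1 y Hy) E).
  - intros y Hy. destruct (F3 y Hy) as [z [Hz <-]]. destruct (G3 z Hz) as [x [Hx <-]]. eauto.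
Qed.

Section Composition.
Variables (f g : R -> R) (P Q : list R) (pi : nat -> nat).
Hypothesis Hf : bij_X f.
Hypothesis Hg : bij_X g.
Hypothesis HPg : affine_partition g P.
Hypothesis HPf : forall j, (j < nb_int P)%nat -> affine_on f (beta g P j) (img_end g P j).
Hypothesis HQ : is_partition Q.
Hypothesis HnQ : nb_int Q = nb_int P.
Hypothesis Hpi : is_perm (nb_int P) pi.
Hypothesis Hpi_piece : forall j, (j < nb_int P)%nat ->
  alpha Q (pi j) = beta g P j /\ bnd Q (pi j) = img_end g P j.

Let n := nb_int P.
Let fg := fun x => f (g x).

Lemma comp_piece j : (j < n)%nat ->
  affine_on fg (alpha P j) (bnd P j) /\
  decrb fg (alpha P j) (bnd P j) =
    xorb (decrb g (alpha P j) (bnd P j)) (decrb f (alpha Q (pi j)) (bnd Q (pi j))) /\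
  beta fg P j = beta f Q (pi j).
Proof.
  intros Hj. destruct (beta_affine g P HPg j Hj) as [s [c [Hs [Hgx Hbeta]]]].
  change (beta fg P j) with (img_glb fg (alpha P j) (bnd P j)).
  change (beta f Q (pi j)) with (img_glb f (alpha Q (pi j)) (bnd Q (pi j))).
  pose proof (HPf j Hj) as Hfj. destruct (Hpi_piece j Hj) as [-> ->].
  unfold img_end in *. rewrite Hbeta in *. unfold fg.
  apply affine_on_comp; auto. apply (alpha_lt_bnd P (proj1 HPg)); auto.
Qed.

Lemma affine_partition_Q : affine_partition f Q.
Proof.
  split; auto. intros k Hk. rewrite HnQ in Hk.
  destruct (is_perm_surj n pi Hpi k Hk) as [j [Hj <-]].
  destruct (Hpi_piece j Hj) as [-> ->]. apply HPf; auto.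
Qed.

Lemma affine_partition_comp : affine_partition fg P.
Proof. split; [apply HPg|]. intros j Hj. apply comp_piece; auto. Qed.

Lemma xsum_decrb_comp :
  xsum (seq 0 n) (fun j => decrb fg (alpha P j) (bnd P j)) =
  xorb (xsum (seq 0 n) (fun j => decrb g (alpha P j) (bnd P j)))
       (xsum (seq 0 (nb_int Q)) (fun k => decrb f (alpha Q k) (bnd Q k))).
Proof.
  rewrite HnQ. fold n.
  rewrite <- (xsum_reindex n pi (fun k => decrb f (alpha Q k) (bnd Q k)) Hpi), <- xsum_xorb.
  apply xsum_ext_in. intros j Hj. apply in_seq in Hj. apply comp_piece. lia.
Qed.

Lemma inv_par_comp :
  inv_par n (fun i => fg (alpha P i)) (beta fg P) =
  xorb (inv_par n (fun i => g (alpha P i)) (beta g P))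
       (inv_par (nb_int Q) (fun k => f (alpha Q k)) (beta f Q)).
Proof.
  rewrite HnQ. fold n.
  pose proof (bij_X_comp f g Hf Hg) as Hfg.
  destruct (beta_perm_h_alpha g P Hg HPg) as [rho [Hrho Hrv]].
  assert (Iu : inj_below n (fun i => fg (alpha P i)))
    by exact (h_alpha_inj fg P Hfg affine_partition_comp).
  assert (Ew : forall i, (i < n)%nat -> f (beta g P i) = fg (alpha P (rho i)))
    by (intros i Hi; unfold fg; now rewrite Hrv).
  assert (Iw : inj_below n (fun i => f (beta g P i))).
  { intros i j Hi Hj E. rewrite !Ew in E by auto. apply (inj_below_comp n _ rho Iu Hrho); auto. }
  assert (Iv : inj_below n (beta fg P)) by exact (beta_inj fg P Hfg affine_partition_comp).
  rewrite (inv_par_trans n _ (fun i => f (beta g P i))) by auto.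
  f_equal.
  - transitivity (inv_par n (fun i => fg (alpha P i)) (fun i => fg (alpha P (rho i)))).
    { apply xsum2_ext. intros i j Hi Hj. unfold discord. now rewrite !Ew. }
    transitivity (inv_par n (fun i => g (alpha P i)) (fun i => g (alpha P (rho i)))).
    { exact (inv_par_relabel n (fun i => fg (alpha P i)) (fun i => g (alpha P i)) rho
               Iu (h_alpha_inj g P Hg HPg) Hrho). }
    apply xsum2_ext. intros i j Hi Hj. unfold discord. now rewrite !Hrv.
  - rewrite <- (inv_par_reindex n pi (fun k => f (alpha Q k)) (beta f Q) Hpi).
    apply xsum2_ext. intros i j Hi Hj. unfold discord.
    destruct (Hpi_piece i Hi) as [-> _]. destruct (Hpi_piece j Hj) as [-> _].
    now rewrite !(proj2 (proj2 (comp_piece _ Hi))), !(proj2 (proj2 (comp_piece _ Hj))).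
Qed.

Lemma eps_comp : eps fg = xorb (eps f) (eps g).
Proof.
  rewrite (eps_eq_eps_P fg P (bij_X_comp f g Hf Hg) affine_partition_comp),
    (eps_eq_eps_P f Q Hf affine_partition_Q), (eps_eq_eps_P g P Hg HPg), !eps_P_xsum.
  fold n. rewrite xsum_decrb_comp, inv_par_comp.
  destruct (xsum _ (fun j => decrb g _ _)), (xsum _ (fun k => decrb f _ _)),
    (inv_par n _ (beta g P)), (inv_par _ _ (beta f Q)); reflexivity.
Qed.

End Composition.

Theorem lemma3p8 : forall f g : R -> R, IET f -> IET g ->
  eps (fun x => f (g x)) = xorb (eps f) (eps g).
Proof.
  intros f g Hf Hg.
  destruct (IET_affine_partition f Hf) as [F HF].
  destruct (IET_affine_partition g Hg) as [G HG].
  destruct (ex_adapted_partition f g F G (proj1 Hg) HF HG) as [P [HPg HPf]].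
  destruct (image_partition g P (proj1 Hg) HPg) as [Q [pi [HQ [HnQ [Hpi Hpiece]]]]].
  apply (eps_comp f g P Q pi); auto; [apply Hf|apply Hg].
Qed.
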